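(* Let $R$ be a commutative ring with $2\in R^\times$ in which $-1$ is a square. Let $(a,b,c)\in R^3$ be a unimodular row. Then $V(a^2,b,c)=2V(a,b,c)$ in $W_E(R)$.
   Context: A row $(a,b,c)$ is unimodular if $aR+bR+cR=R$. For such a row choose $a',b',c'$ with $aa'+bb'+cc'=1$; the Vaserstein symbol $V(a,b,c)\in W_E(R)$ is the class of $$\begin{pmatrix}0&-a&-b&-c\\ a&0&-c'&b'\\ b&c'&0&-a'\\ c&-b'&a'&0\end{pmatrix},$$ which (by a theorem of Vaserstein) does not depend on the choice of $(a',b',c')$. Here $W_E(R)$ is the elementary symplectic Witt group: with $M\perp N=\begin{pmatrix}M&0\\0&N\end{pmatrix}$, $\psi_2=\begin{pmatrix}0&1\\-1&0\end{pmatrix}$, $\psi_{2r}=\psi_2\perp\psi_{2r-2}$, let $S_{2n}(R)$ be the invertible alternating $2n\times 2n$ matrices of Pfaffian $1$, included in $S_{2n'}(R)$ via $G\mapsto G\perp\psi_{2n'-2n}$, $S(R)=\bigcup S_{2n}(R)$; $G\in S_{2n}(R)$ and $G'\in S_{2m}(R)$ are equivalent iff $G\perp\psi_{2(m+t)}=E^t(G'\perp\psi_{2(n+t)})E$ for some $t$ and some elementary $E\in E_{2(m+n+t)}(R)$; $W_E(R)$ is the set of classes, an abelian group under $\perp$. *)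

From HB Require Import structures.
From mathcomp Require Import all_boot all_order all_algebra.
Set Implicit Arguments. Unset Strict Implicit. Unset Printing Implicit Defensive.
Import GRing.Theory.
Local Open Scope ring_scope.

Section Defs.
Variable R : comPzRingType.

(* The elementary group E_n(R): products of elementary transvections
   1 + r e_{ij} (i <> j).  (Inverses of transvections are transvections,
   so the monoid generated is the group generated.) *)
Inductive elementary (n : nat) : 'M[R]_n -> Prop :=
| elem1 : elementary 1%:M
| elemT (M : 'M[R]_n) (i j : 'I_n) (r : R) :
    i != j -> elementary M -> elementary (M *m (1%:M + r *: delta_mx i j)).

(* psi k : for k = 2r this is psi_{2r} = psi_2 _|_ ... _|_ psi_2 (r copies),
   written entrywise: entry (2s, 2s+1) = 1, entry (2s+1, 2s) = -1, else 0. *)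
Definition psi (k : nat) : 'M[R]_k :=
  \matrix_(i < k, j < k)
    (if ~~ odd i && (j == i.+1 :> nat) then 1
     else if odd i && (j.+1 == i :> nat) then -1 else 0).

Definition perp (p q : nat) (M : 'M[R]_p) (N : 'M[R]_q) : 'M[R]_(p + q)%N :=
  block_mx M 0 0 N.

Lemma size_eq1 p q t : (p + (q + t) = p + q + t)%N.
Proof. by rewrite addnA. Qed.
Lemma size_eq2 p q t : (q + (p + t) = p + q + t)%N.
Proof. by rewrite addnA (addnC q). Qed.

(* Equivalence in W_E(R): for G of size p = 2n and G' of size q = 2m,
   G _|_ psi_{2(m+t)} = E^T (G' _|_ psi_{2(n+t)}) E with E in E_{2(m+n+t)}. *)
Definition WE_equiv (p q : nat) (G : 'M[R]_p) (G' : 'M[R]_q) : Prop :=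
  exists (t : nat) (E : 'M[R]_(p + q + t.*2)%N),
    elementary E /\
    castmx (size_eq1 p q t.*2, size_eq1 p q t.*2) (perp G (psi (q + t.*2)%N))
    = E^T *m castmx (size_eq2 p q t.*2, size_eq2 p q t.*2)
                    (perp G' (psi (p + t.*2)%N)) *m E.

(* The matrix representing the Vaserstein symbol V(a,b,c), given a',b',c'
   with a a' + b b' + c c' = 1. *)
Definition vmat (a b c a' b' c' : R) : 'M[R]_4 :=
  \matrix_(i < 4, j < 4)
    match nat_of_ord i, nat_of_ord j with
    | 0, 1 => - a | 0, 2 => - b | 0, 3 => - c
    | 1, 0 => a   | 1, 2 => - c' | 1, 3 => b'
    | 2, 0 => b   | 2, 1 => c'   | 2, 3 => - a'
    | 3, 0 => c   | 3, 1 => - b' | 3, 2 => a'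
    | _, _ => 0
    end.

End Defs.

(* Let [J] be the Vaserstein matrix of [(a, b, c)] and [H(M)] the hyperbolic
   Gram matrix [[0, M], [-M^T, 0]].  Since the symbol does not depend on the
   complementary row, [V(a^2, b, c)] may be computed with the row
   [(a'^2, a'(c + a b') + b', a'(a c' - b) + c')], for which its matrix is
   [D^T (-psi_4) D] with [D] explicitly invertible.  Over [R] with a square
   root [x] of [-1], [psi_4 _|_ psi_4] is congruent to [H(1)], and Whitehead's
   lemma moves [D] into the hyperbolic part: [D^T X D _|_ H(1) ~ X _|_ H(D^T)].
   Now [D^T = P^T (x J) Q] with [P], [Q] elementary, and when [2] is
   invertible [H(x J)] is congruent to [J _|_ J]. *)

From HB Require Import structures.
From mathcomp Require Import all_boot all_order all_algebra.
From mathcomp Require Import ring.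
Set Implicit Arguments. Unset Strict Implicit. Unset Printing Implicit Defensive.
Import GRing.Theory.
Local Open Scope ring_scope.

Ltac mx_simp :=
  rewrite ?(mulmx0, mul0mx, mulmx1, mul1mx, addr0, add0r, mulmxN, mulNmx, opprK).

Section ElementaryCongruence.
Variable R : comPzRingType.

Lemma elementary_mul n (A B : 'M[R]_n) :
  elementary A -> elementary B -> elementary (A *m B).
Proof.
move=> eA; elim=> [|M i j r ij _ IH]; first by rewrite mulmx1.
by rewrite mulmxA; apply: elemT.
Qed.

Lemma elementary_castmx m n (e : m = n) (A : 'M[R]_m) :
  elementary A -> elementary (castmx (e, e) A).
Proof. by case: n / e; rewrite castmx_id. Qed.

Lemma elementary_block_mxl m n (A : 'M[R]_m) :
  elementary A -> elementary (block_mx A 0 0 (1%:M : 'M_n)).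
Proof.
elim=> [|M i j r ij _ IH]; first by rewrite -scalar_mx_block; apply: elem1.
have lift_delta : delta_mx (lshift n i) (lshift n j)
                  = block_mx (delta_mx i j) 0 0 0 :> 'M[R]_(m + n).
  by rewrite delta_mx_ushift delta_mx_lshift block_mxEv row_mx0.
have -> : block_mx (M *m (1%:M + r *: delta_mx i j)) 0 0 (1%:M : 'M_n)
   = block_mx M 0 0 1%:M *m (1%:M + r *: delta_mx (lshift n i) (lshift n j)).
  rewrite lift_delta (scalar_mx_block m n 1) scale_block_mx !scaler0 add_block_mx.
  by rewrite mulmx_block; mx_simp.
by apply: elemT => //; rewrite (inj_eq (@lshift_inj _ _)).
Qed.

Lemma elementary_block_mxr m n (A : 'M[R]_n) :
  elementary A -> elementary (block_mx (1%:M : 'M_m) 0 0 A).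
Proof.
elim=> [|M i j r ij _ IH]; first by rewrite -scalar_mx_block; apply: elem1.
have lift_delta : delta_mx (rshift m i) (rshift m j)
                  = block_mx 0 0 0 (delta_mx i j) :> 'M[R]_(m + n).
  by rewrite delta_mx_dshift delta_mx_rshift block_mxEv row_mx0.
have -> : block_mx (1%:M : 'M_m) 0 0 (M *m (1%:M + r *: delta_mx i j))
   = block_mx 1%:M 0 0 M *m (1%:M + r *: delta_mx (rshift m i) (rshift m j)).
  rewrite lift_delta (scalar_mx_block m n 1) scale_block_mx !scaler0 add_block_mx.
  by rewrite mulmx_block; mx_simp.
by apply: elemT => //; rewrite (inj_eq (@rshift_inj _ _)).
Qed.

Lemma elementary_block_mx m n (A : 'M[R]_m) (B : 'M[R]_n) :
  elementary A -> elementary B -> elementary (block_mx A 0 0 B).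
Proof.
move=> eA eB.
have -> : block_mx A 0 0 B = block_mx A 0 0 1%:M *m block_mx 1%:M 0 0 B.
  by rewrite mulmx_block; mx_simp.
by apply: elementary_mul; [apply: elementary_block_mxl | apply: elementary_block_mxr].
Qed.

(* The transvections [1 + M i j *: delta_mx i j] have pairwise vanishing
   nilpotent parts, so [1 + M] is their product. *)
Lemma elementary_add1mx_support n (M : 'M[R]_n) (S : pred 'I_n) :
  (forall i j, ~~ S i || S j -> M i j = 0) -> elementary (1%:M + M).
Proof.
move=> suppM.
pose T (x : 'I_n * 'I_n) := M x.1 x.2 *: delta_mx x.1 x.2.
have prod_sum s : elementary (1%:M + \sum_(x <- s) T x).
  elim: s => [|[i j] s IH]; first by rewrite big_nil addr0; apply: elem1.
  have sumT_mul : (\sum_(x <- s) T x) *m T (i, j) = 0.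
    rewrite mulmx_suml big1_seq // => [[k l]] _.
    rewrite /T -scalemxAl -scalemxAr mul_delta_mx_cond /=.
    have [->|] := eqVneq l i; last by rewrite /= !scaler0.
    case Si: (S i); first by rewrite (suppM k i) ?Si ?orbT // !scale0r.
    by rewrite (suppM i j) ?Si // scale0r scaler0.
  rewrite big_cons.
  have -> : 1%:M + (T (i, j) + \sum_(x <- s) T x)
          = (1%:M + \sum_(x <- s) T x) *m (1%:M + T (i, j)).
    by rewrite mulmxDr mulmx1 mulmxDl mul1mx sumT_mul addr0 addrA addrAC.
  have [eij|nij] := eqVneq i j; last exact: elemT.
  by rewrite /T -eij (suppM i i) ?orNb // scale0r addr0 mulmx1.
rewrite [X in 1%:M + X](matrix_sum_delta M) pair_bigA /=.
exact: prod_sum.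
Qed.

Lemma elementary_block_upper m n (X : 'M[R]_(m, n)) :
  elementary (block_mx 1%:M X 0 1%:M : 'M_(m + n)).
Proof.
have -> : block_mx 1%:M X 0 1%:M = 1%:M + block_mx 0 X 0 0 :> 'M[R]_(m + n).
  by rewrite (scalar_mx_block m n 1) add_block_mx !addr0 !add0r.
apply: (@elementary_add1mx_support _ _ (fun k : 'I_(m + n) => (k < m)%N)) => i j.
rewrite -[i]splitK -[j]splitK; case: (split i) => i'; case: (split j) => j' /=;
  rewrite ?(block_mxEul, block_mxEur, block_mxEdl, block_mxEdr) ?mxE //=.
by rewrite ltn_ord ltnNge leq_addr.
Qed.

Lemma elementary_block_lower m n (Y : 'M[R]_(n, m)) :
  elementary (block_mx 1%:M 0 Y 1%:M : 'M_(m + n)).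
Proof.
have -> : block_mx 1%:M 0 Y 1%:M = 1%:M + block_mx 0 0 Y 0 :> 'M[R]_(m + n).
  by rewrite (scalar_mx_block m n 1) add_block_mx !addr0 !add0r.
apply: (@elementary_add1mx_support _ _ (fun k : 'I_(m + n) => (m <= k)%N)) => i j.
rewrite -[i]splitK -[j]splitK; case: (split i) => i'; case: (split j) => j' /=;
  rewrite ?(block_mxEul, block_mxEur, block_mxEdl, block_mxEdr) ?mxE //=.
by rewrite leq_addr leqNgt ltn_ord.
Qed.

Ltac elementary_blocks :=
  repeat first [apply: elementary_block_upper | apply: elementary_block_lower
               | apply: elementary_mul].

Lemma elementary_block_inv n (Y Yi : 'M[R]_n) :
  Y *m Yi = 1%:M -> Yi *m Y = 1%:M -> elementary (block_mx Y 0 0 Yi : 'M_(n + n)).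
Proof.
move=> YYi YiY.
have -> : block_mx Y 0 0 Yi =
  block_mx 1%:M Y 0 1%:M *m block_mx 1%:M 0 (- Yi) 1%:M *m block_mx 1%:M Y 0 1%:M *m
  block_mx 1%:M (-1%:M) 0 1%:M *m block_mx 1%:M 0 1%:M 1%:M *m block_mx 1%:M (-1%:M) 0 1%:M
  :> 'M_(n + n).
  rewrite !mulmx_block; mx_simp; rewrite YYi YiY subrr; mx_simp.
  by rewrite ?(addNr, oppr0, addr0, add0r).
by elementary_blocks.
Qed.

(* [x = diag(x, x^-1) diag(1, -1)] and [-1 = diag(-1, (-1)^-1)]. *)
Lemma elementary_scalar_sqrtN1 n (x : R) : x * x = -1 ->
  elementary (x%:M : 'M[R]_((n + n) + (n + n))).
Proof.
move=> xx.
have diag_opp k (y : R) : y * - y = 1 -> elementary (block_mx y%:M 0 0 (- y)%:M : 'M_(k + k)).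
  by move=> yy; apply: elementary_block_inv; rewrite -scalar_mxM ?[- y * y]mulrC yy.
have -> : x%:M = block_mx x%:M 0 0 (- x)%:M
                 *m block_mx 1%:M 0 0 (-1)%:M :> 'M[R]_((n + n) + (n + n)).
  rewrite mulmx_block; mx_simp; rewrite -scalar_mxM mulrN1 opprK.
  exact: scalar_mx_block.
apply: elementary_mul; first by apply: diag_opp; rewrite mulrN xx opprK.
apply: elementary_block_mx; first exact: elem1.
by rewrite scalar_mx_block; apply: elementary_block_inv; rewrite -scalar_mxM mulrN1 opprK.
Qed.

Definition econg n (X Y : 'M[R]_n) := exists E, elementary E /\ X = E^T *m Y *m E.

Lemma econg_refl n (X : 'M[R]_n) : econg X X.
Proof. by exists 1%:M; split; [apply: elem1 | rewrite trmx1 mul1mx mulmx1]. Qed.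

Lemma econg_trans n (X Y Z : 'M[R]_n) : econg X Y -> econg Y Z -> econg X Z.
Proof.
move=> [E [eE ->]] [F [eF ->]]; exists (F *m E); split; first exact: elementary_mul.
by rewrite trmx_mul !mulmxA.
Qed.

Lemma castmx_refl m n (e1 : m = m) (e2 : n = n) (X : 'M[R]_(m, n)) : castmx (e1, e2) X = X.
Proof. by rewrite (eq_irrelevance e1 erefl) (eq_irrelevance e2 erefl) castmx_id. Qed.

Lemma econg_castmx m n (e : m = n) (X Y : 'M[R]_m) :
  econg X Y -> econg (castmx (e, e) X) (castmx (e, e) Y).
Proof. by case: n / e; rewrite !castmx_id. Qed.

Lemma econg_perp m n (X X' : 'M[R]_m) (Y Y' : 'M[R]_n) :
  econg X X' -> econg Y Y' -> econg (perp X Y) (perp X' Y').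
Proof.
move=> [E [eE ->]] [F [eF ->]]; exists (block_mx E 0 0 F).
split; first exact: elementary_block_mx.
by rewrite /perp tr_block_mx !trmx0 !mulmx_block; mx_simp.
Qed.

Lemma econg_perpC n (X Y : 'M[R]_n) : econg (perp X Y) (perp Y X).
Proof.
have swap : block_mx 0 1%:M (-1%:M) 0 = block_mx 1%:M 1%:M 0 1%:M
    *m block_mx 1%:M 0 (-1%:M) 1%:M *m block_mx 1%:M 1%:M 0 1%:M :> 'M[R]_(n + n).
  by rewrite !mulmx_block; mx_simp; rewrite !(addrN, addNr, add0r).
exists (block_mx 0 1%:M (-1%:M) 0); split; first by rewrite swap; elementary_blocks.
rewrite /perp tr_block_mx !trmx0 trmx1 raddfN /= trmx1 !mulmx_block; mx_simp.
by rewrite oppr0.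
Qed.

Lemma perpA m n p (X : 'M[R]_m) (Y : 'M[R]_n) (Z : 'M[R]_p) :
  perp X (perp Y Z)
  = castmx (esym (addnA m n p), esym (addnA m n p)) (perp (perp X Y) Z).
Proof. by have := block_mxAx X 0 0 0 Y 0 0 0 Z; rewrite /= !row_mx0 !col_mx0. Qed.

Lemma econg_perp_rot n (X Y Z : 'M[R]_n) :
  econg (perp X (perp Y Z))
        (castmx (esym (addnA n n n), esym (addnA n n n)) (perp (perp Y Z) X)).
Proof.
pose cast := (esym (addnA n n n), esym (addnA n n n)).
rewrite perpA; apply: (@econg_trans _ _ (castmx cast (perp (perp Y X) Z))).
  by apply/econg_castmx/econg_perp; [apply: econg_perpC | apply: econg_refl].
rewrite -!perpA.
by apply: econg_perp; [apply: econg_refl | apply: econg_perpC].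
Qed.

Definition hypmx n (M : 'M[R]_n) : 'M[R]_(n + n) := block_mx 0 M (- M^T) 0.

Lemma hypmx_mul n (X Y M : 'M[R]_n) :
  hypmx (X^T *m M *m Y) = (block_mx X 0 0 Y)^T *m hypmx M *m block_mx X 0 0 Y.
Proof.
rewrite /hypmx tr_block_mx !trmx0 !mulmx_block; mx_simp.
by rewrite !trmx_mul trmxK !mulmxA.
Qed.

Lemma econg_hypmx_mul n (X Y M : 'M[R]_n) : elementary X -> elementary Y ->
  econg (hypmx (X^T *m M *m Y)) (hypmx M).
Proof.
move=> eX eY; exists (block_mx X 0 0 Y).
by split; [apply: elementary_block_mx | apply: hypmx_mul].
Qed.

(* The congruence is by [diag(D, D^-1, 1)], elementary by Whitehead's lemma. *)
Lemma econg_perp_hypmx_shift n (E D Di : 'M[R]_n) : D *m Di = 1%:M -> Di *m D = 1%:M ->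
  econg (perp (D^T *m E *m D) (hypmx 1%:M)) (perp E (hypmx D^T)).
Proof.
move=> DDi DiD; pose K := block_mx Di 0 0 (1%:M : 'M_n).
exists (block_mx D 0 0 K); split.
  rewrite /K; have := block_mxAx D 0 0 0 Di 0 0 0 (1%:M : 'M_n).
  rewrite /= !row_mx0 !col_mx0 => ->.
  by apply/elementary_castmx/elementary_block_mx; [apply: elementary_block_inv | apply: elem1].
have -> : hypmx 1%:M = K^T *m hypmx D^T *m K.
  by rewrite -hypmx_mul -trmx_mul DDi trmx1 mulmx1.
by rewrite /perp tr_block_mx !trmx0 !mulmx_block; mx_simp.
Qed.

Lemma econg_hypmx_scale n (J : 'M[R]_n) (x u : R) :
  J^T = - J -> x * x = -1 -> u + u = 1 -> econg (hypmx (x *: J)) (perp J J).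
Proof.
move=> Jalt xx uu; have u1 : 1 - u = u by rewrite -uu addrK.
exists (block_mx 1%:M (x * u)%:M x%:M u%:M); split.
  have -> : block_mx 1%:M (x * u)%:M x%:M u%:M =
     block_mx 1%:M 0 x%:M 1%:M *m block_mx 1%:M (x * u)%:M 0 1%:M :> 'M[R]_(n + n).
    rewrite mulmx_block; mx_simp; rewrite -scalar_mxM -raddfD /= mulrA xx mulN1r.
    by rewrite -{2}u1 addrC.
  by elementary_blocks.
rewrite /hypmx /perp tr_block_mx !tr_scalar_mx !mulmx_block; mx_simp.
rewrite !mul_scalar_mx !mul_mx_scalar !scalerA -!scalerDl linearZ /= Jalt scalerN opprK.
rewrite xx scaleN1r addrN -mulrDr -(mulrC x) -mulrDr uu mulr1.
have -> : x * u * (x * u) + u * u = (x * x + 1) * (u * u) by ring.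
by rewrite xx addNr mul0r scale0r.
Qed.

Lemma econg_perp_hypmx1 n (J Y : 'M[R]_n) (x : R) :
  J = Y - Y^T -> J *m J = -1%:M -> x * x = -1 -> elementary (x%:M : 'M_n) ->
  econg (perp J J) (hypmx 1%:M).
Proof.
move=> JY JJ xx ex; pose B := x *: J.
have Jalt : J^T = - J by rewrite JY linearB /= trmxK opprB.
have BJB : B^T *m J *m B = - J.
  rewrite /B [(x *: J)^T]linearZ /= Jalt -!scalemxAl -scalemxAr scalerA xx scaleN1r.
  by rewrite !mulNmx JJ !mulNmx mul1mx opprK.
exists (block_mx 1%:M B Y (Y^T *m B)); split.
  have -> : block_mx 1%:M B Y (Y^T *m B)
     = block_mx 1%:M 0 Y 1%:M *m block_mx 1%:M 0 0 x%:M *m block_mx 1%:M B 0 1%:M.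
    rewrite !mulmx_block; mx_simp; congr block_mx.
    have YJ : Y = J + Y^T by rewrite JY subrK.
    by rewrite [in RHS]YJ mulmxDl /B -!scalemxAr JJ scalerN scalemx1 addrAC addNr add0r.
  by elementary_blocks; apply: elementary_block_mx => //; apply: elem1.
rewrite /hypmx /perp tr_block_mx trmx1 !mulmx_block; mx_simp.
rewrite trmx_mul trmxK !addNr; congr block_mx; first by rewrite addrC JY.
by rewrite !mulmxA addrC -mulmxBl -mulmxBr -opprB -JY mulmxN mulNmx BJB opprK.
Qed.

Lemma econg_oppmx n (J : 'M[R]_n) (x : R) : x * x = -1 -> elementary (x%:M : 'M_n) ->
  econg (- J) J.
Proof.
move=> xx ex; exists x%:M; split => //.
by rewrite tr_scalar_mx mul_scalar_mx mul_mx_scalar scalerA xx scaleN1r.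
Qed.
End ElementaryCongruence.

Ltac mx4_entries := let i := fresh "i" in let j := fresh "j" in
  apply/matrixP => i j; do 6 rewrite ?mxE ?big_ord_recr ?big_ord0 /=;
  case: i => [[|[|[|[|?]]]] ?] //; case: j => [[|[|[|[|?]]]] ?] //=.

Section Vaserstein.
Variable R : comPzRingType.

Definition mx4 (f : nat -> nat -> R) : 'M[R]_4 := \matrix_(i < 4, j < 4) f i j.

Definition unip_row0 (p0 p1 p2 : R) : 'M[R]_4 := 1%:M + mx4 (fun i j =>
  match i, j with 0, 1 => p0 | 0, 2 => p1 | 0, 3 => p2 | _, _ => 0 end).

Definition unip_col0 (q0 q1 q2 : R) : 'M[R]_4 := 1%:M + mx4 (fun i j =>
  match i, j with 1, 0 => q0 | 2, 0 => q1 | 3, 0 => q2 | _, _ => 0 end).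

Lemma elementary_unip_row0 (p0 p1 p2 : R) : elementary (unip_row0 p0 p1 p2).
Proof.
apply: (@elementary_add1mx_support _ _ _ (fun k : 'I_4 => val k == 0%N)) => i j.
by rewrite mxE; case: i => [[|[|[|[|?]]]] ?] //; case: j => [[|[|[|[|?]]]] ?].
Qed.

Lemma elementary_unip_col0 (q0 q1 q2 : R) : elementary (unip_col0 q0 q1 q2).
Proof.
apply: (@elementary_add1mx_support _ _ _ (fun k : 'I_4 => val k != 0%N)) => i j.
by rewrite mxE; case: i => [[|[|[|[|?]]]] ?] //; case: j => [[|[|[|[|?]]]] ?].
Qed.

(* [u = w - v × (w × (u - w))] when [v·u = v·w = 1]. *)
Lemma complementary_row_cross (v0 v1 v2 w0 w1 w2 u0 u1 u2 : R) :
  v0 * w0 + v1 * w1 + v2 * w2 = 1 -> v0 * u0 + v1 * u1 + v2 * u2 = 1 ->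
  u0 = w0 - (v1 * (w0 * (u1 - w1) - w1 * (u0 - w0))
             - v2 * (w2 * (u0 - w0) - w0 * (u2 - w2))).
Proof.
move=> hw hu; pose Sw := v0 * w0 + v1 * w1 + v2 * w2.
transitivity (u0 + (u0 - w0) * (Sw - 1) + w0 * (Sw - (v0 * u0 + v1 * u1 + v2 * u2))).
  by rewrite /Sw hw hu !subrr !mulr0 !addr0.
by rewrite /Sw; ring.
Qed.

Lemma vmat_unip_row0 (v0 v1 v2 w0 w1 w2 x0 x1 x2 : R) :
  vmat v0 v1 v2 (w0 - (v1 * x2 - v2 * x1)) (w1 - (v2 * x0 - v0 * x2))
                (w2 - (v0 * x1 - v1 * x0))
  = (unip_row0 x0 x1 x2)^T *m vmat v0 v1 v2 w0 w1 w2 *m unip_row0 x0 x1 x2.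
Proof. mx4_entries; ring. Qed.

Lemma econg_vmat_complement (v0 v1 v2 w0 w1 w2 u0 u1 u2 : R) :
  v0 * w0 + v1 * w1 + v2 * w2 = 1 -> v0 * u0 + v1 * u1 + v2 * u2 = 1 ->
  econg (vmat v0 v1 v2 u0 u1 u2) (vmat v0 v1 v2 w0 w1 w2).
Proof.
move=> hw hu; pose d0 := u0 - w0; pose d1 := u1 - w1; pose d2 := u2 - w2.
exists (unip_row0 (w1 * d2 - w2 * d1) (w2 * d0 - w0 * d2) (w0 * d1 - w1 * d0)).
split; first exact: elementary_unip_row0.
rewrite -vmat_unip_row0 /d0 /d1 /d2; congr vmat.
- exact: (@complementary_row_cross v0).
- by apply: (@complementary_row_cross v1); [rewrite -hw | rewrite -hu]; ring.
- by apply: (@complementary_row_cross v2); [rewrite -hw | rewrite -hu]; ring.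
Qed.

Lemma vmat_tr (a b c A B C : R) : (vmat a b c A B C)^T = - vmat a b c A B C.
Proof. by mx4_entries; rewrite ?opprK ?oppr0. Qed.

Lemma psi8_perp : (psi R 8 : 'M_(4 + 4)) = perp (psi R 4) (psi R 4).
Proof.
apply/matrixP => i j; rewrite /perp -[i]splitK -[j]splitK.
case: (split i) => i'; case: (split j) => j' /=;
  rewrite ?(block_mxEul, block_mxEur, block_mxEdl, block_mxEdr) !mxE /=;
  by case: i' => [[|[|[|[|?]]]] ?] //; case: j' => [[|[|[|[|?]]]] ?].
Qed.

Definition psi4_upper : 'M[R]_4 :=
  mx4 (fun i j => match i, j with 0, 1 => 1 | 2, 3 => 1 | _, _ => 0 end).

Lemma psi4_upperE : psi R 4 = psi4_upper - psi4_upper^T.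
Proof. by mx4_entries; rewrite ?subrr ?subr0 ?sub0r. Qed.

Lemma psi4_sqr : psi R 4 *m psi R 4 = - 1%:M.
Proof. mx4_entries; ring. Qed.

Definition twist_mx (a : R) : 'M[R]_4 := mx4 (fun i j =>
  match i, j with 0, 1 => -1 | 1, 0 => 1 | 1, 1 => a | 2, 2 => 1 | 3, 3 => 1 | _, _ => 0 end).

Lemma twist_mxE (a : R) :
  twist_mx a = unip_row0 (-1) 0 0 *m unip_col0 1 0 0 *m unip_row0 (a - 1) 0 0.
Proof. by mx4_entries; ring. Qed.

Lemma elementary_twist_mx (a : R) : elementary (twist_mx a).
Proof.
by rewrite twist_mxE; repeat apply: elementary_mul;
  [apply: elementary_unip_row0 | apply: elementary_unip_col0 | apply: elementary_unip_row0].
Qed.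

Lemma vmat_twist (a b c A B C : R) :
  vmat a C (- B) A (c + a * B) (a * C - b)
  = (twist_mx a)^T *m vmat a b c A B C *m twist_mx a.
Proof. by mx4_entries; ring. Qed.

Section SquareFactor.
Variables (a b c A B C : R).
Hypothesis complementary : a * A + b * B + c * C = 1.

Let q1 := c + a * B.
Let q2 := a * C - b.

Definition sq_factor : 'M[R]_4 := mx4 (fun i j =>
  match i, j with
  | 0, 0 => 1
  | 1, 1 => a * a | 1, 2 => b | 1, 3 => c
  | 2, 1 => - b + a * C + a * C | 2, 2 => C * C | 2, 3 => - (B * C) - A
  | 3, 1 => - c - a * B - a * B | 3, 2 => A - B * C | 3, 3 => B * B
  | _, _ => 0 end).

Definition sq_factor_inv : 'M[R]_4 := mx4 (fun i j =>
  match i, j with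
  | 0, 0 => 1
  | 1, 1 => A * A | 1, 2 => A * q1 - B | 1, 3 => A * q2 - C
  | 2, 1 => q1 * A + B | 2, 2 => q1 * q1 | 2, 3 => q1 * q2 + a
  | 3, 1 => q2 * A + C | 3, 2 => q2 * q1 - a | 3, 3 => q2 * q2
  | _, _ => 0 end).

Let hA : a * A = 1 - b * B - c * C.
Proof. by rewrite -complementary; ring. Qed.

Lemma sq_factor_mulV : sq_factor *m sq_factor_inv = 1%:M.
Proof. by mx4_entries; rewrite /q1 /q2; ring: hA. Qed.

Lemma sq_factor_Vmul : sq_factor_inv *m sq_factor = 1%:M.
Proof. by mx4_entries; rewrite /q1 /q2; ring: hA. Qed.

Lemma vmat_sq_factor :
  vmat (a ^+ 2) b c (A * A) (A * q1 + B) (A * q2 + C)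
  = sq_factor^T *m (- psi R 4) *m sq_factor.
Proof. by mx4_entries; rewrite /q1 /q2; ring: hA. Qed.

Lemma sq_factor_trE :
  sq_factor^T = - ((unip_row0 a C (- B))^T *m vmat a C (- B) A q1 q2
                   *m (unip_col0 A q1 q2 *m unip_row0 (- a) (- C) B)).
Proof. by mx4_entries; rewrite /q1 /q2; ring: hA. Qed.

Lemma econg_hypmx_sq_factor (x u : R) : x * x = -1 -> u + u = 1 ->
  econg (hypmx sq_factor^T) (perp (vmat a b c A B C) (vmat a b c A B C)).
Proof.
move=> xx uu; set J := vmat a b c A B C.
have ex : elementary (x%:M : 'M_4) := elementary_scalar_sqrtN1 1 xx.
have -> : sq_factor^T = (twist_mx a *m (x%:M *m unip_row0 a C (- B)))^T *m (x *: J)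
                        *m (twist_mx a *m (unip_col0 A q1 q2 *m unip_row0 (- a) (- C) B)).
  rewrite sq_factor_trE vmat_twist !trmx_mul tr_scalar_mx mul_mx_scalar.
  by rewrite -!scalemxAl -!scalemxAr -scalemxAl scalerA xx scaleN1r !mulmxA.
apply: econg_trans (econg_hypmx_scale (vmat_tr _ _ _ _ _ _) xx uu).
apply: econg_hypmx_mul; repeat apply: elementary_mul => //;
  by [apply: elementary_twist_mx | apply: elementary_unip_row0 | apply: elementary_unip_col0].
Qed.

Lemma econg_vmat_sq (x u a'' b'' c'' : R) :
  x * x = -1 -> u + u = 1 -> a ^+ 2 * a'' + b * b'' + c * c'' = 1 ->
  econg (perp (vmat (a ^+ 2) b c a'' b'' c'') (psi R 8))
        (perp (perp (vmat a b c A B C) (vmat a b c A B C)) (psi R 4)).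
Proof.
move=> xx uu complementary2.
have ex : elementary (x%:M : 'M_4) := elementary_scalar_sqrtN1 1 xx.
have sq_complementary : a ^+ 2 * (A * A) + b * (A * q1 + B) + c * (A * q2 + C) = 1.
  by rewrite /q1 /q2; ring: hA.
apply: econg_trans (econg_perp (econg_vmat_complement sq_complementary complementary2)
                               (econg_refl _)) _.
rewrite psi8_perp.
apply: econg_trans
  (econg_perp (econg_refl _) (econg_perp_hypmx1 psi4_upperE psi4_sqr xx ex)) _.
rewrite vmat_sq_factor.
apply: econg_trans (econg_perp_hypmx_shift _ sq_factor_mulV sq_factor_Vmul) _.
apply: econg_trans (econg_perp (econg_refl _) (econg_hypmx_sq_factor xx uu)) _.
apply: econg_trans (econg_perp (econg_oppmx _ xx ex) (econg_refl _)) _.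
by have := econg_perp_rot (psi R 4) (vmat a b c A B C) (vmat a b c A B C); rewrite castmx_refl.
Qed.

End SquareFactor.
End Vaserstein.

Theorem lemma5p2 (R : comPzRingType)
  (two_unit : exists u : R, 2 * u = 1)
  (minus1_square : exists i : R, i * i = -1)
  (a b c : R)
  (unimod : exists x y z : R, a * x + b * y + c * z = 1)
  (a' b' c' : R) (h1 : a * a' + b * b' + c * c' = 1)
  (a'' b'' c'' : R) (h2 : a ^+ 2 * a'' + b * b'' + c * c'' = 1) :
  WE_equiv (vmat (a ^+ 2) b c a'' b'' c'')
           (perp (vmat a b c a' b' c') (vmat a b c a' b' c')).
Proof.
(* [unimod] is implied by [h1]. *)
have [u u2] := two_unit; have [x xx] := minus1_square.
have uu : u + u = 1 by rewrite -u2 mulrDl mul1r.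
have [E [eE congE]] := econg_vmat_sq h1 xx uu h2.
by exists 0%N, E; rewrite !castmx_refl.
Qed.
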